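(* Let $r$ and $d$ be positive integers, $\operatorname{Tv}(d,r)=(d+1)(r-1)+1$, and let $S\subset\mathbb{R}^d$ be a set of $n>\operatorname{Tv}(d,r)$ points. Then the clique number of the Tverberg $r$-partition graph satisfies $\omega(G_T[S,r])=r$.
   Context: A partition of a finite set $S$ into $r$ parts is a collection of $r$ nonempty pairwise disjoint subsets $P_1,\dots,P_r$ (unordered) whose union is $S$. For a finite $S\subset\mathbb{R}^d$, a Tverberg partition of $S$ into $r$ parts is such a partition with $\bigcap_{j=1}^r\operatorname{conv}(P_j)\neq\emptyset$. For two partitions $P,P'$ of $S$, the partition distance $D(P,P')$ is the minimum number of elements of $S$ that must be removed so that $P$ and $P'$ restricted to the remaining elements coincide. The Tverberg $r$-partition graph $G_T[S,r]$ has as vertices all Tverberg partitions of $S$ into $r$ parts, with an edge between $P$ and $P'$ if and only if $D(P,P')=1$. The clique number $\omega(G)$ is the number of vertices of a largest complete subgraph of $G$. *)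

From HB Require Import structures.
From mathcomp Require Import all_boot all_order all_algebra.
From mathcomp Require Import reals.
Set Implicit Arguments. Unset Strict Implicit. Unset Printing Implicit Defensive.
Import Order.TTheory GRing.Theory Num.Theory.

(* A finite point set S ⊂ R^d with n points is given as an injective map
   p : 'I_n -> 'rV[R]_d (so S = image of p, and #|S| = n).  Partitions of S
   are identified with partitions of the index set 'I_n, i.e. sets of blocks
   P : {set {set 'I_n}} with [partition P] (nonempty pairwise disjoint blocks
   covering 'I_n); unordered by construction. *)

Section Tverberg.
Variables (R : realType) (d n : nat).
Local Open Scope ring_scope.

Definition in_conv (p : 'I_n -> 'rV[R]_d) (B : {set 'I_n}) (x : 'rV[R]_d) : Prop :=
  exists w : 'I_n -> R,
    [/\ forall i, 0 <= w i,
        forall i, i \notin B -> w i = 0,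
        \sum_i w i = 1
      & x = \sum_i w i *: p i].

Definition r_partition (r : nat) (P : {set {set 'I_n}}) : bool :=
  partition P [set: 'I_n] && (#|P| == r)%N.

Definition tverberg_partition (p : 'I_n -> 'rV[R]_d) (r : nat)
    (P : {set {set 'I_n}}) : Prop :=
  r_partition r P /\ exists x, forall B, B \in P -> in_conv p B x.

End Tverberg.

Section Dist.
Variable n : nat.

Definition restr (P : {set {set 'I_n}}) (X : {set 'I_n}) : {set {set 'I_n}} :=
  [set B :&: X | B in P] :\ set0.

(* partition distance: minimum number of elements Y to remove so that the
   restrictions to the remaining elements ~: Y coincide (Y = setT always works) *)
Definition partition_dist (P Q : {set {set 'I_n}}) : nat :=
  \big[minn/n]_(Y : {set 'I_n} | restr P (~: Y) == restr Q (~: Y)) #|Y|.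
End Dist.

Definition tverberg_clique (R : realType) (d n : nat) (p : 'I_n -> 'rV[R]_d)
    (r : nat) (C : {set {set {set 'I_n}}}) : Prop :=
  (forall P, P \in C -> tverberg_partition p r P) /\
  (forall P Q, P \in C -> Q \in C -> P != Q -> partition_dist P Q = 1%N).

Definition tverberg_clique_number_is (R : realType) (d n : nat)
    (p : 'I_n -> 'rV[R]_d) (r k : nat) : Prop :=
  (exists C, tverberg_clique p r C /\ #|C| = k) /\
  (forall C, tverberg_clique p r C -> (#|C| <= k)%N).

Definition Tv (d r : nat) : nat := ((d + 1) * (r - 1) + 1)%N.

(* Lower bound: by Tverberg's theorem the first [n - 1] points have a Tverberg
   [r]-partition, and adding the last point to each of its [r] parts gives [r]
   Tverberg partitions that differ only in the last point.  Tverberg's theorem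
   is derived by Sarkaria's tensor trick from the colorful Caratheodory theorem,
   which is proved by minimizing the norm of colorful convex combinations.
   Upper bound: two [r]-partitions at distance 1 differ by moving one point out
   of a non-singleton block into another block.  Fix a member [P1] of a clique.
   If all other members move the same point, they are determined by the block
   receiving it, so there are at most [r - 1] of them.  If two of them move
   distinct points [x], [y], their own distance 1 forces
   [P1 = {x, y} | {w} | ...], which leaves room for no third one, and [r >= 3]
   unless [n <= 3]. *)

From HB Require Import structures.
From mathcomp Require Import all_boot all_order all_algebra.
From mathcomp Require Import reals.
From mathcomp Require boolp classical_sets topology normedtype derive.
From mathcomp Require Import ring lra.
Set Implicit Arguments. Unset Strict Implicit. Unset Printing Implicit Defensive.
Import Order.TTheory GRing.Theory Num.Theory.

Section PartitionsOfOrdinals.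
Variable n : nat.
Implicit Types (P Q : {set {set 'I_n}}) (B : {set 'I_n}) (i j x y w : 'I_n).

Definition partT P := partition P [set: 'I_n].

Lemma pblockT_mem P i : partT P -> pblock P i \in P.
Proof. by move=> hP; apply: pblock_mem; rewrite (cover_partition hP) inE. Qed.

Lemma mem_pblockT P i : partT P -> i \in pblock P i.
Proof. by move=> hP; rewrite mem_pblock (cover_partition hP) inE. Qed.

Lemma pblockT_def P B i : partT P -> B \in P -> i \in B -> pblock P i = B.
Proof. by move=> hP; apply: def_pblock; exact: partition_trivIset hP. Qed.

Lemma same_pblockT P i j : partT P -> j \in pblock P i -> pblock P j = pblock P i.
Proof. by move=> hP; apply: same_pblock; exact: partition_trivIset hP. Qed.

Lemma pblockT_sym P i j : partT P -> (j \in pblock P i) = (i \in pblock P j).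
Proof. by move=> hP; apply/idP/idP => ij; rewrite (same_pblockT hP ij) mem_pblockT. Qed.

Lemma partT_block_n0 P B : partT P -> B \in P -> exists i, i \in B.
Proof.
move=> hP PB; have [B0|[i Bi]] := set_0Vmem B; last by exists i.
by move: PB; rewrite B0 (partition0 hP).
Qed.

Lemma partT_eq P Q : partT P -> partT Q -> pblock P =1 pblock Q -> P = Q.
Proof.
suff sub P' Q' : partT P' -> partT Q' -> pblock P' =1 pblock Q' -> {subset P' <= Q'}.
  by move=> hP hQ eqPQ; apply/setP => B; apply/idP/idP; apply: sub.
move=> hP hQ eqPQ B PB; have [i Bi] := partT_block_n0 hP PB.
by rewrite -(pblockT_def hP PB Bi) eqPQ pblockT_mem.
Qed.

Definition agree P Q x := forall i j, i != x -> j != x ->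
  (j \in pblock P i) = (j \in pblock Q i).

Lemma agree_sym P Q x : agree P Q x -> agree Q P x.
Proof. by move=> agPQ i j ix jx; rewrite agPQ. Qed.

Lemma agree_trans P Q S x : agree P Q x -> agree Q S x -> agree P S x.
Proof. by move=> agPQ agQS i j ix jx; rewrite agPQ // agQS. Qed.

Lemma agree_eq P Q x : partT P -> partT Q -> agree P Q x ->
  pblock P x = pblock Q x -> P = Q.
Proof.
move=> hP hQ agPQ eq_x; apply: partT_eq => // i.
have [->|ix] := eqVneq i x; first exact: eq_x.
apply/setP => j; have [->|jx] := eqVneq j x; last exact: agPQ.
by rewrite pblockT_sym // [RHS]pblockT_sym // eq_x.
Qed.

Definition adj_at P Q x := restr P (~: [set x]) = restr Q (~: [set x]).

Lemma mem_restr P X B :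
  B \in restr P X = (B != set0) && [exists C in P, B == C :&: X].
Proof.
rewrite !inE; congr (_ && _).
apply/imsetP/existsP => [[C PC ->]|[C /andP[PC /eqP ->]]]; last by exists C.
by exists C; rewrite PC eqxx.
Qed.

Lemma adj_agree P Q x : partT P -> partT Q -> adj_at P Q x -> agree P Q x.
Proof.
suff sub P' Q' : partT P' -> partT Q' -> adj_at P' Q' x ->
    forall i j, i != x -> j != x -> j \in pblock P' i -> j \in pblock Q' i.
  by move=> hP hQ adjPQ i j ix jx; apply/idP/idP; apply: sub.
move=> hP hQ adjPQ i j ix jx Pij.
have : pblock P' i :&: ~: [set x] \in restr P' (~: [set x]).
  rewrite mem_restr; apply/andP; split.
    by apply/set0Pn; exists i; rewrite !inE ix mem_pblockT.
  by apply/existsP; exists (pblock P' i); rewrite pblockT_mem ?eqxx.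
rewrite adjPQ mem_restr => /andP[_ /existsP[C /andP[Q'C /eqP PC]]].
have in_C k : k != x -> k \in pblock P' i -> k \in C.
  move=> kx Pik; have : k \in pblock P' i :&: ~: [set x] by rewrite !inE; apply/andP.
  by rewrite PC inE => /andP[].
by rewrite (pblockT_def hQ Q'C (in_C i ix (mem_pblockT i hP))) in_C.
Qed.

Lemma restr_singleton_block P B x : partT P -> B \in P ->
  B :&: ~: [set x] = set0 -> B = [set x].
Proof.
move=> hP PB B0; have [i Bi] := partT_block_n0 hP PB.
have B_x j : j \in B -> j = x.
  move=> Bj; apply/eqP; apply: contraT => jx.
  have : j \in B :&: ~: [set x] by rewrite !inE; apply/andP.
  by rewrite B0 inE.
have Bx : x \in B by rewrite -(B_x i Bi).
by apply/setP => j; rewrite inE; apply/idP/eqP => [/B_x|->].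
Qed.

Lemma card_restr_lt P x : [set x] \in P -> #|restr P (~: [set x])| < #|P|.
Proof.
move=> Px; have x_vanishes : set0 \in [set B :&: ~: [set x] | B in P].
  by apply/imsetP; exists [set x] => //; apply/setP => j; rewrite !inE andbN.
apply: leq_trans (leq_imset_card (fun B => B :&: ~: [set x]) P).
by rewrite [X in _ <= X](cardsD1 set0) x_vanishes.
Qed.

Lemma card_restr_ge P x : partT P -> [set x] \notin P ->
  #|P| <= #|restr P (~: [set x])|.
Proof.
move=> hP Px; have no_vanish : set0 \notin [set B :&: ~: [set x] | B in P].
  apply/imsetP => -[B PB /esym/(restr_singleton_block hP PB) B_x].
  by move: Px; rewrite -B_x PB.
rewrite /restr (setDidPl _); last by rewrite disjoint_sym disjoints1.
rewrite card_in_imset // => B C PB PC eqBC.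
have [B0|[i Bi]] := set_0Vmem (B :&: ~: [set x]).
  by move: Px; rewrite -(restr_singleton_block hP PB B0) PB.
have iC : i \in C by move: Bi; rewrite eqBC inE => /andP[].
move: Bi; rewrite inE => /andP[iB _].
by rewrite -(pblockT_def hP PB iB) (pblockT_def hP PC iC).
Qed.

(* Deleting [x] loses a block exactly when [x] is a singleton block. *)
Lemma adj_singleton P Q x : partT Q -> #|P| = #|Q| -> adj_at P Q x ->
  [set x] \in P -> [set x] \in Q.
Proof.
move=> hQ cardPQ adjPQ Px; apply: contraT => Qx.
have := card_restr_ge hQ Qx; rewrite -adjPQ -cardPQ => le_P.
by have := leq_trans (card_restr_lt Px) le_P; rewrite ltnn.
Qed.

Lemma adj_nsingleton P Q x : partT P -> partT Q -> #|P| = #|Q| -> adj_at P Q x ->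
  P != Q -> [set x] \notin P.
Proof.
move=> hP hQ cardPQ adjPQ; apply: contraNN => Px; apply/eqP.
have Qx := adj_singleton hQ cardPQ adjPQ Px.
apply: agree_eq (adj_agree hP hQ adjPQ) _ => //.
by rewrite (pblockT_def hP Px (set11 x)) (pblockT_def hQ Qx (set11 x)).
Qed.

(* [P] arises from [P1] by moving [x] out of its non-singleton block of [P1]
   into another block of [P1]. *)
Definition moves P1 P x := [/\ agree P P1 x, pblock P x :\ x \in P1 &
  exists2 a, a \in pblock P1 x & a != x].

Lemma moves_of_adj P1 P x : partT P1 -> partT P -> #|P| = #|P1| ->
  adj_at P P1 x -> P != P1 -> moves P1 P x.
Proof.
move=> hP1 hP cardP adjP P_neq.
have agP := adj_agree hP hP1 adjP.
have not_alone S : partT S -> [set x] \notin S -> exists2 a, a \in pblock S x & a != x.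
  move=> hS Sx; have [a /andP[]|alone] := pickP (fun a => (a \in pblock S x) && (a != x)).
    by exists a.
  suff Sx_eq : pblock S x = [set x] by move: Sx; rewrite -Sx_eq pblockT_mem.
  apply/setP => a; rewrite inE; apply/idP/eqP => [Sa|->]; last exact: mem_pblockT.
  by apply/eqP; apply: contraFT (alone a) => ax; rewrite Sa.
split => //; last first.
  apply: not_alone => //; apply: adj_nsingleton hP1 hP (esym cardP) (esym adjP) _.
  by rewrite eq_sym.
have [a0 Pa0 a0x] := not_alone P hP (adj_nsingleton hP hP1 cardP adjP P_neq).
have P_P1 a : a != x -> (a \in pblock P x) = (a \in pblock P1 a0).
  by move=> ax; rewrite -(same_pblockT hP Pa0) agP.
have x_a0 : x \notin pblock P1 a0.
  apply: contra P_neq => P1x; apply/eqP; apply: agree_eq agP _ => //.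
  apply/setP => a; have [->|ax] := eqVneq a x; first by rewrite !mem_pblockT.
  by rewrite P_P1 // (same_pblockT hP1 P1x).
suff -> : pblock P x :\ x = pblock P1 a0 by apply: pblockT_mem.
apply/setP => a; rewrite !inE; have [->|ax] := eqVneq a x; first by rewrite (negbTE x_a0).
exact: P_P1.
Qed.

Lemma moves_eq P1 P P' x : partT P -> partT P' -> agree P P1 x -> agree P' P1 x ->
  pblock P x :\ x = pblock P' x :\ x -> P = P'.
Proof.
move=> hP hP' agP agP' eqB; apply: agree_eq (agree_trans agP (agree_sym agP')) _ => //.
by rewrite -(setD1K (mem_pblockT x hP)) eqB setD1K // mem_pblockT.
Qed.

Lemma moves_disjoint P1 Q z a : partT P1 -> moves P1 Q z ->
  a \in pblock Q z :\ z -> a \notin pblock P1 z.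
Proof.
move=> hP1 [_ P1B _] Ba; apply/negP => P1za.
have : z \in pblock Q z :\ z.
  by rewrite -(pblockT_def hP1 P1B Ba) (same_pblockT hP1 P1za) mem_pblockT.
by rewrite !inE eqxx.
Qed.

(* The only configuration: [P1 = {x, y} | {w} | ...], [P = {y} | {x, w} | ...]
   and [P' = {x} | {y, w} | ...]. *)
Section TwoMoves.
Variables (P1 P P' : {set {set 'I_n}}) (x y w : 'I_n).
Hypotheses (hP1 : partT P1) (mP : moves P1 P x) (mP' : moves P1 P' y).
Hypotheses (xy : x != y) (agPP' : agree P P' w).

Lemma two_moves_neq : w != x.
Proof.
apply/eqP => wx; have agPx : agree P P' x by rewrite -wx.
have [agP _ _] := mP; have [_ P1B' [a P1ya ay]] := mP'.
have off_x b : b != x -> b \in pblock P' y :\ y -> False.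
  move=> bx B'b; have /andP[by_ P'yb] : (b != y) && (b \in pblock P' y) by rewrite -in_setD1.
  have : b \in pblock P1 y by rewrite -agP ?agPx // eq_sym.
  by apply/negP; apply: moves_disjoint mP' B'b.
have [b B'b] := partT_block_n0 hP1 P1B'.
have bx : b = x by apply/eqP; apply: contraT => bx; case: (off_x b bx B'b).
have ax : a = x.
  apply/eqP; apply: contraT => ax; case: (off_x a ax).
  by rewrite !inE ay -agPx ?agP // eq_sym.
by move: (moves_disjoint hP1 mP' B'b); rewrite bx -{1}ax P1ya.
Qed.

Lemma two_moves_shape : w != y -> [/\ w \in pblock P x :\ x,
  {subset pblock P x :\ x <= [set w]}, y \in pblock P1 x &
  {subset pblock P1 x <= [set x; y]}].
Proof.
move=> wy; have xw : x != w by rewrite eq_sym two_moves_neq.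
have [_ P1B [a0 P1xa0 a0x]] := mP; have [agP' _ [a1 P1ya1 a1y]] := mP'.
have others a : a != x -> a != y -> a != w ->
    (a \notin pblock P x :\ x) && (a \notin pblock P1 x).
  move=> ax ay aw.
  have P_P1 : (a \in pblock P x :\ x) = (a \in pblock P1 x).
    by rewrite !inE ax agPP' // agP'.
  case Ba : (a \in pblock P x :\ x); last by rewrite -P_P1 Ba.
  by have := moves_disjoint hP1 mP Ba; rewrite -P_P1 Ba.
have y_B : y \notin pblock P x :\ x.
  apply/negP => By.
  have B_def := pblockT_def hP1 P1B By.
  have Ba1 : a1 \in pblock P x :\ x by rewrite -B_def.
  have a1x : a1 != x by move: Ba1; rewrite !inE => /andP[].
  have a1w : a1 = w.
    by apply/eqP; apply: contraT => a1w; have := others a1 a1x a1y a1w; rewrite Ba1.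
  have a0B : a0 \notin pblock P x :\ x by apply: contraL P1xa0; apply: moves_disjoint.
  have a0y : a0 != y by apply: contraNneq a0B => ->.
  have a0w : a0 != w by apply: contraNneq a0B => ->; rewrite -a1w.
  by have := others a0 a0x a0y a0w; rewrite P1xa0 andbF.
have B_w b : b \in pblock P x :\ x -> b = w.
  move=> Bb; apply/eqP; apply: contraT => bw.
  have bx : b != x by move: Bb; rewrite !inE => /andP[].
  have by_ : b != y by apply: contraNneq y_B => <-.
  by have := others b bx by_ bw; rewrite Bb.
have Bw : w \in pblock P x :\ x.
  by have [b Bb] := partT_block_n0 hP1 P1B; rewrite -(B_w b Bb).
have P1xw : w \notin pblock P1 x by apply: moves_disjoint mP Bw.
have a0w : a0 != w by apply: contraNneq P1xw => <-.
split => //; first by move=> b /B_w ->; exact: set11.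
- suff -> : y = a0 by [].
  apply/eqP; rewrite eq_sym; apply: contraT => a0y.
  by have := others a0 a0x a0y a0w; rewrite P1xa0 andbF.
- move=> a P1xa; rewrite !inE; have [//|ax] := eqVneq a x; apply: contraT => ay.
  have aw : a != w by apply: contraNneq P1xw => <-.
  by have := others a ax ay aw; rewrite P1xa andbF.
Qed.

End TwoMoves.

Lemma two_moves P1 P P' x y w : partT P1 -> moves P1 P x -> moves P1 P' y ->
  x != y -> agree P P' w ->
  [/\ pblock P x :\ x = pblock P' y :\ y, y \in pblock P1 x,
      {subset pblock P1 x <= [set x; y]} & {subset pblock P x :\ x <= [set w]}].
Proof.
move=> hP1 mP mP' xy agPP'; have yx : y != x by rewrite eq_sym.
have wx := two_moves_neq hP1 mP mP' xy agPP'.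
have wy := two_moves_neq hP1 mP' mP yx (agree_sym agPP').
have [Bw B_w P1xy P1x_xy] := two_moves_shape hP1 mP mP' xy agPP' wy.
have [B'w _ _ _] := two_moves_shape hP1 mP' mP yx (agree_sym agPP') wx.
have [_ P1B _] := mP; have [_ P1B' _] := mP'.
by split => //; rewrite -(pblockT_def hP1 P1B Bw) (pblockT_def hP1 P1B' B'w).
Qed.

Lemma pblockD1_neq P1 P x : partT P1 -> pblock P x :\ x != pblock P1 x.
Proof. by move=> hP1; apply/eqP => eqB; have := mem_pblockT x hP1; rewrite -eqB !inE eqxx. Qed.

Lemma moves_sub_blocks P1 P x : partT P1 -> moves P1 P x ->
  [set pblock P1 x; pblock P x :\ x] \subset P1.
Proof.
move=> hP1 [_ P1B _]; apply/subsetP => B.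
by rewrite !inE => /orP[]/eqP->; rewrite ?pblockT_mem.
Qed.

Lemma moves_card_gt1 P1 P x : partT P1 -> moves P1 P x -> 1 < #|P1|.
Proof.
move=> hP1 mP; apply: leq_trans (subset_leq_card (moves_sub_blocks hP1 mP)).
by rewrite cards2 eq_sym pblockD1_neq.
Qed.

Lemma card_moves_at_lt P1 (D : {set {set {set 'I_n}}}) x : partT P1 ->
  (forall P, P \in D -> partT P /\ moves P1 P x) -> #|D| < #|P1|.
Proof.
move=> hP1 D_mv; pose f P := pblock P x :\ x.
have f_inj : {in D &, injective f}.
  move=> P Q /D_mv[hP [agP _ _]] /D_mv[hQ [agQ _ _]]; exact: moves_eq hP hQ agP agQ.
have f_sub : f @: D \subset P1 :\ pblock P1 x.
  apply/subsetP => _ /imsetP[P /D_mv[_ mP] ->].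
  by have [_ P1B _] := mP; rewrite !inE P1B andbT pblockD1_neq.
rewrite -(card_in_imset f_inj); apply: leq_ltn_trans (subset_leq_card f_sub) _.
by rewrite [X in _ < X](cardsD1 (pblock P1 x)) pblockT_mem.
Qed.

Lemma two_moves_card P1 P P' x y w : partT P1 -> moves P1 P x -> moves P1 P' y ->
  x != y -> agree P P' w -> #|P1| = 2 -> n <= 3.
Proof.
move=> hP1 mP mP' xy agPP' card_P1.
have [_ _ P1x_xy B_w] := two_moves hP1 mP mP' xy agPP'.
have P1_AB : [set pblock P1 x; pblock P x :\ x] = P1.
  apply/eqP; rewrite eqEcard moves_sub_blocks // card_P1 cards2.
  by rewrite eq_sym pblockD1_neq.
rewrite -[n]card_ord -cardsT; apply: leq_trans (_ : #|[set x; y; w]| <= 3).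
  apply/subset_leq_card/subsetP => i _.
  have : i \in cover P1 by rewrite (cover_partition hP1) inE.
  rewrite -P1_AB /cover bigcup_setU !big_set1 inE => /orP[/P1x_xy|/B_w].
    by rewrite !inE => /orP[]->; rewrite ?orbT.
  by rewrite !inE => ->; rewrite !orbT.
apply: leq_trans (leq_card_setU _ _) _; rewrite cards1 addn1 ltnS.
by apply: leq_trans (leq_card_setU _ _) _; rewrite !cards1.
Qed.

Lemma two_moves_third P1 P P' Q x y z w w1 w2 : partT P1 -> partT P -> partT P' ->
  partT Q -> moves P1 P x -> moves P1 P' y -> moves P1 Q z -> x != y ->
  agree P P' w -> agree P Q w1 -> agree P' Q w2 -> Q = P \/ Q = P'.
Proof.
move=> hP1 hP hP' hQ mP mP' mQ xy agPP' agPQ agP'Q; have yx : y != x by rewrite eq_sym.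
have [agP _ _] := mP; have [agP' _ _] := mP'; have [agQ _ _] := mQ.
have [eqB _ P1x_xy _] := two_moves hP1 mP mP' xy agPP'.
have [zx|xz] := eqVneq z x.
  rewrite {}zx in mQ agQ; left; apply: moves_eq hQ hP agQ agP _.
  by have [-> _ _ _] := two_moves hP1 mQ mP' xy (agree_sym agP'Q); rewrite eqB.
have [zy|yz] := eqVneq z y.
  rewrite {}zy in mQ agQ; right; apply: moves_eq hQ hP' agQ agP' _.
  by have [-> _ _ _] := two_moves hP1 mQ mP yx (agree_sym agPQ); rewrite eqB.
have xz' : x != z by rewrite eq_sym.
have [_ P1xz _ _] := two_moves hP1 mP mQ xz' agPQ.
by move: (P1x_xy z P1xz); rewrite !inE (negbTE xz) (negbTE yz).
Qed.

Lemma restr0 P : restr P set0 = set0.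
Proof.
apply/setP => B; rewrite !inE; apply/negP => /andP[B_n0 /imsetP[C _ B_eq]].
by move: B_n0; rewrite B_eq setI0 eqxx.
Qed.

Lemma restrT P : partT P -> restr P [set: 'I_n] = P.
Proof.
move=> hP; apply/setP => B; rewrite !inE.
apply/andP/idP => [[_ /imsetP[C PC ->]]|PB]; first by rewrite setIT.
split; first by apply: contraTneq PB => ->; rewrite (partition0 hP).
by apply/imsetP; exists B; rewrite ?setIT.
Qed.

Lemma partition_distP P Q :
  exists2 Y, restr P (~: Y) = restr Q (~: Y) & partition_dist P Q = #|Y|.
Proof.
rewrite /partition_dist; elim/big_ind: _ => [|a b [Y eqY ->] [Z eqZ ->]|Y /eqP eqY].
- by exists [set: 'I_n]; rewrite ?setCT ?restr0 // cardsT card_ord.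
- by rewrite /minn; case: ifP => _; [exists Y|exists Z].
- by exists Y.
Qed.

Lemma partition_dist_min P Q Y :
  restr P (~: Y) = restr Q (~: Y) -> partition_dist P Q <= #|Y|.
Proof.
rewrite /partition_dist unlock => /eqP eqY.
have : Y \in index_enum {set 'I_n} by rewrite mem_index_enum.
elim: (index_enum _) => // Z s IHs; rewrite inE /= => /orP[/eqP <-|/IHs le_s].
  by rewrite eqY geq_minl.
by case: ifP => // _; apply: leq_trans (geq_minr _ _) le_s.
Qed.

Lemma partition_dist1P P Q : partT P -> partT Q -> P != Q ->
  partition_dist P Q = 1 <-> exists x, adj_at P Q x.
Proof.
move=> hP hQ PQ; split => [dist1|[x adjPQ]].
  have [Y eqY] := partition_distP P Q; rewrite dist1 => /esym/eqP/cards1P[x Y_x].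
  by exists x; rewrite /adj_at -Y_x.
apply/eqP; rewrite eqn_leq; apply/andP; split; first by rewrite -(cards1 x) partition_dist_min.
have [Y eqY ->] := partition_distP P Q; rewrite card_gt0.
by apply: contra PQ => /eqP Y0; move: eqY; rewrite Y0 setC0 !restrT // => ->.
Qed.

Section Clique.
Variables (r : nat) (C : {set {set {set 'I_n}}}).
Hypothesis C_part : forall P, P \in C -> r_partition r P.
Hypothesis C_dist : forall P Q, P \in C -> Q \in C -> P != Q -> partition_dist P Q = 1.

Let C_partT P : P \in C -> partT P.
Proof. by move/C_part/andP => []. Qed.

Let C_card P : P \in C -> #|P| = r.
Proof. by move/C_part/andP => [_ /eqP]. Qed.

Let C_adj P Q : P \in C -> Q \in C -> P != Q -> exists x, adj_at P Q x.
Proof. by move=> CP CQ PQ; apply/(partition_dist1P (C_partT CP) (C_partT CQ) PQ)/C_dist. Qed.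

Let C_agree P Q : P \in C -> Q \in C -> P != Q -> exists w, agree P Q w.
Proof.
move=> CP CQ PQ; have [w adjPQ] := C_adj CP CQ PQ.
by exists w; apply: adj_agree adjPQ; apply: C_partT.
Qed.

Let C_moves P1 P x : P1 \in C -> P \in C :\ P1 -> adj_at P P1 x -> moves P1 P x.
Proof.
move=> CP1 /setD1P[PP1 CP] adjP.
by apply: moves_of_adj; rewrite ?C_partT ?C_card.
Qed.

Lemma clique_common_mover_card P1 x : P1 \in C ->
  (forall P, P \in C :\ P1 -> adj_at P P1 x) -> #|C :\ P1| < r.
Proof.
move=> CP1 D_x; rewrite -(C_card CP1); apply: card_moves_at_lt (C_partT CP1) _ => P DP.
by split; [case/setD1P: DP => _ /C_partT | exact/C_moves/D_x].
Qed.

Lemma clique_two_movers_card P1 P P' x y : (r = 2 -> 3 < n) -> P1 \in C ->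
  P \in C :\ P1 -> P' \in C :\ P1 -> P != P' ->
  adj_at P P1 x -> adj_at P' P1 y -> x != y -> #|C :\ P1| < r.
Proof.
move=> n_gt3 CP1 DP DP' PP' adjP adjP' xy.
have mP := C_moves CP1 DP adjP; have mP' := C_moves CP1 DP' adjP'.
have /setD1P[_ CP] := DP; have /setD1P[_ CP'] := DP'.
have hP1 := C_partT CP1; have card_P1 := C_card CP1.
have [w agPP'] := C_agree CP CP' PP'.
have r_gt2 : 2 < r.
  rewrite -card_P1 ltn_neqAle (moves_card_gt1 hP1 mP) andbT; apply/eqP => card2.
  have := two_moves_card hP1 mP mP' xy agPP' (esym card2).
  by rewrite leqNgt n_gt3 // -card_P1.
apply: leq_ltn_trans r_gt2; rewrite -[2]/((true : nat).+1) -PP' -cards2.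
apply/subset_leq_card/subsetP => Q DQ; rewrite !inE.
have [//|QP] := eqVneq Q P; have [_|QP'] := eqVneq Q P'; first by rewrite orbT.
have /setD1P[QP1 CQ] := DQ; have [z /(C_moves CP1 DQ) mQ] := C_adj CQ CP1 QP1.
have [w1 agPQ] : exists w1, agree P Q w1 by apply: C_agree; rewrite // eq_sym.
have [w2 agP'Q] : exists w2, agree P' Q w2 by apply: C_agree; rewrite // eq_sym.
have := two_moves_third hP1 (C_partT CP) (C_partT CP') (C_partT CQ) mP mP' mQ xy agPP'.
by case/(_ _ _ agPQ agP'Q) => QE; [case/eqP: QP | case/eqP: QP'].
Qed.

Lemma clique_card_le : 0 < r -> (r = 2 -> 3 < n) -> #|C| <= r.
Proof.
move=> r_gt0 n_gt3; have [->|[P1 CP1]] := set_0Vmem C; first by rewrite cards0.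
rewrite (cardsD1 P1) CP1 add1n.
have [/existsP[x /forall_inP D_x]|] := boolP [exists x, [forall P in C :\ P1,
    restr P (~: [set x]) == restr P1 (~: [set x])]].
  by apply: (clique_common_mover_card (x := x) CP1) => P /D_x /eqP.
rewrite negb_exists => /forallP not_common.
have [->|[P DP]] := set_0Vmem (C :\ P1); first by rewrite cards0.
have /setD1P[PP1 CP] := DP; have [x adjP] := C_adj CP CP1 PP1.
have /forall_inPn[P' DP' /eqP not_adjP'] := not_common x.
have /setD1P[P'P1 CP'] := DP'; have [y adjP'] := C_adj CP' CP1 P'P1.
apply: (clique_two_movers_card n_gt3 CP1 DP DP' _ adjP adjP').
  by apply: contra_not_neq not_adjP' => <-.
by apply: contra_not_neq not_adjP' => ->.
Qed.

End Clique.

End PartitionsOfOrdinals.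

Section ColorPartitions.
Variables (n r : nat).
Implicit Types (tau : 'I_n -> 'I_r) (j : 'I_r).

Definition color_class tau j := [set i | tau i == j].

Definition color_part tau := [set color_class tau j | j : 'I_r].

Lemma color_class_inj tau : (forall j, exists i, tau i = j) -> injective (color_class tau).
Proof.
move=> tau_surj j j' eq_jj'; have [i tau_i] := tau_surj j.
have : i \in color_class tau j by rewrite inE tau_i.
by rewrite eq_jj' inE tau_i => /eqP.
Qed.

Lemma color_part_r_partition tau : (forall j, exists i, tau i = j) ->
  r_partition r (color_part tau).
Proof.
move=> tau_surj; apply/andP; split; last first.
  by rewrite card_imset ?card_ord //; apply: color_class_inj.
apply/and3P; split.
- apply/eqP/setP => i; rewrite inE; apply/bigcupP; exists (color_class tau (tau i)).
    exact: imset_f.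
  by rewrite inE.
- apply/trivIsetP => _ _ /imsetP[j _ ->] /imsetP[j' _ ->] neq.
  rewrite disjoint_subset; apply/subsetP => i; rewrite !inE => /eqP ->.
  by apply: contraNneq neq => ->.
- apply/imsetP => -[j _ /esym/setP class0]; have [i tau_i] := tau_surj j.
  by have := class0 i; rewrite !inE tau_i eqxx.
Qed.

Lemma pblock_color_part tau i : (forall j, exists i, tau i = j) ->
  pblock (color_part tau) i = color_class tau (tau i).
Proof.
move=> tau_surj; have /andP[hP _] := color_part_r_partition tau_surj.
by apply: pblockT_def hP (imset_f _ _) _; rewrite ?inE.
Qed.

End ColorPartitions.

Definition extend_color m r (s : 'I_m -> 'I_r) (k : 'I_r) (i : 'I_m.+1) : 'I_r :=
  if unlift ord_max i is Some i' then s i' else k.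

Section ExtendColor.
Variables (m r : nat) (s : 'I_m -> 'I_r).
Hypothesis s_surj : forall j, exists i, s i = j.

Lemma extend_color_lift k i : extend_color s k (lift ord_max i) = s i.
Proof. by rewrite /extend_color liftK. Qed.

Lemma extend_color_max k : extend_color s k ord_max = k.
Proof. by rewrite /extend_color unlift_none. Qed.

Lemma extend_color_surj k j : exists i, extend_color s k i = j.
Proof. by have [i s_i] := s_surj j; exists (lift ord_max i); rewrite extend_color_lift. Qed.

Lemma adj_extend_color k l :
  adj_at (color_part (extend_color s k)) (color_part (extend_color s l)) ord_max.
Proof.
rewrite /adj_at /restr /color_part -!imset_comp; congr (_ :\ _); apply: eq_imset => j /=.
apply/setP => i; rewrite !inE; have [i' ->|->] := unliftP ord_max i.
  by rewrite !extend_color_lift.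
by rewrite eqxx !andbF.
Qed.

Lemma extend_color_neq k l : k != l ->
  color_part (extend_color s k) != color_part (extend_color s l).
Proof.
apply: contraNneq => eq_kl; have [i s_i] := s_surj k.
have mem_class k' : lift ord_max i \in pblock (color_part (extend_color s k')) ord_max =
    (s i == k').
  rewrite pblock_color_part ?inE ?extend_color_lift ?extend_color_max //.
  exact: extend_color_surj.
by move: (mem_class k); rewrite eq_kl mem_class s_i eqxx => ->.
Qed.

End ExtendColor.

Local Open Scope ring_scope.

Lemma exists_lin_dep (R : fieldType) (K : finType) N (t : 'I_N -> K -> R) :
  (#|K| < N)%N ->
  exists beta : 'I_N -> R, (exists i, beta i != 0) /\
    forall k, \sum_i beta i * t i k = 0.
Proof.
move=> ltKN; pose M := \matrix_(i < N, k < #|K|) t i (enum_val k).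
have : kermx M != 0.
  rewrite -mxrank_eq0 mxrank_ker -lt0n subn_gt0.
  exact: leq_ltn_trans (rank_leq_col M) ltKN.
case/matrix0Pn => i0 [j0 nz_ij]; exists (kermx M i0); split; first by exists j0.
move=> k; have := congr1 (fun A : 'M_(N, #|K|) => A i0 (enum_rank k)) (mulmx_ker M).
rewrite !mxE => sum0; rewrite -[RHS]sum0.
by apply: eq_bigr => j _; rewrite [M _ _]mxE enum_rankK.
Qed.

Lemma sum_eq0_exists_gt0 (R : realDomainType) (I : finType) (F : I -> R) i1 :
  \sum_i F i = 0 -> F i1 != 0 -> exists i, 0 < F i.
Proof.
move=> sF0 Fi1; apply/existsP; apply: contraNT Fi1; rewrite negb_exists => /forallP F_le0.
have NF_ge0 i : 0 <= - F i by rewrite oppr_ge0 leNgt F_le0.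
by rewrite -oppr_eq0 (@psumr_eq0P _ _ xpredT _ (fun i _ => NF_ge0 i)) // sumrN sF0 oppr0.
Qed.

Lemma sum_eq0_exists_le0 (R : realDomainType) (I : finType) (F : I -> R) (i0 : I) :
  \sum_i F i = 0 -> exists i, F i <= 0.
Proof.
move=> sF0; have [Fi0|Fi0] := eqVneq (F i0) 0; first by exists i0; rewrite Fi0.
have sNF0 : \sum_i - F i = 0 by rewrite sumrN sF0 oppr0.
have NFi0 : - F i0 != 0 by rewrite oppr_eq0.
by have [i] := sum_eq0_exists_gt0 sNF0 NFi0; rewrite oppr_gt0 => /ltW; exists i.
Qed.

Section ConvexCombinations.
Variables (R : realFieldType) (K : finType) (N : nat).
Implicit Types (l : 'rV[R]_N) (v : 'I_N -> K -> R) (u w : K -> R).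

Definition in_simplex l := (forall i, 0 <= l ord0 i) /\ \sum_i l ord0 i = 1.

Definition comb v l (k : K) := \sum_i l ord0 i * v i k.

Definition dot u w := \sum_k u k * w k.

Lemma dot_ge0 u : 0 <= dot u u.
Proof. by apply: sumr_ge0 => k _; rewrite -expr2 sqr_ge0. Qed.

Lemma dot_eq0 u : dot u u = 0 -> forall k, u k = 0.
Proof.
move=> u0 k; have /eqP := psumr_eq0P (fun k _ => (sqr_ge0 (u k))) u0 (isT : xpredT k).
by rewrite sqrf_eq0 => /eqP.
Qed.

Lemma eq_dot u u' w w' : u =1 u' -> w =1 w' -> dot u w = dot u' w'.
Proof. by move=> eu ew; apply: eq_bigr => k _; rewrite eu ew. Qed.

Lemma dot_comb u v l : dot u (comb v l) = \sum_i l ord0 i * dot u (v i).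
Proof.
rewrite /dot /comb; under eq_bigr do rewrite mulr_sumr.
rewrite exchange_big; apply: eq_bigr => i _; rewrite mulr_sumr.
by apply: eq_bigr => k _; rewrite mulrCA.
Qed.

Lemma comb_descent v l k : in_simplex l ->
  dot (comb v l) (v k) < dot (comb v l) (comb v l) ->
  exists2 l', in_simplex l' & dot (comb v l') (comb v l') < dot (comb v l) (comb v l).
Proof.
move=> [l_ge0 l_sum1]; set x := comb v l => lt_xt.
pose t := v k; pose u kk := t kk - x kk.
pose a := dot x t - dot x x; pose b := dot u u.
have a_lt0 : a < 0 by rewrite subr_lt0.
have b_ge0 : 0 <= b by apply: dot_ge0.
(* [|x + e u|^2 - |x|^2 = e (2 a + e b)], which is negative for [e = -a / (b - a)]. *)
have [e [e_gt0 e_le1 e_ba]] : exists e, [/\ 0 < e, e <= 1 & e * (b - a) = - a].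
  have ba_gt0 : 0 < b - a by lra.
  exists (- a / (b - a)); split; last by rewrite mulfVK // gt_eqF.
    by rewrite divr_gt0 // oppr_gt0.
  by rewrite ler_pdivrMr // mul1r; lra.
pose l' := \row_i ((1 - e) * l ord0 i + e * (i == k)%:R).
have comb_l' kk : comb v l' kk = x kk + e * u kk.
  rewrite /comb; under eq_bigr do rewrite mxE mulrDl -!mulrA.
  rewrite big_split /= -!mulr_sumr [X in _ + e * X = _](bigD1 k) //= eqxx mul1r.
  rewrite [X in v k kk + X]big1 ?addr0; last by move=> i /negbTE ->; rewrite mul0r.
  by rewrite /u /t /x /comb; ring.
exists l'.
  split => [i|]; first by rewrite mxE addr_ge0 ?mulr_ge0 ?subr_ge0 ?ler0n // ltW.
  under eq_bigr do rewrite mxE.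
  rewrite big_split /= -!mulr_sumr l_sum1 (bigD1 k) //= eqxx.
  by rewrite big1 => [|i /negbTE ->] //; rewrite addr0 /= !mulr1 subrK.
rewrite (eq_dot comb_l' comb_l') /dot.
rewrite (eq_bigr (fun kk => x kk * x kk + e * (2 * (x kk * t kk - x kk * x kk))
  + e ^+ 2 * (u kk * u kk))) => [|kk _]; last by rewrite /u; ring.
rewrite !big_split /= -!mulr_sumr sumrB -/(dot x x) -/(dot x t) -/(dot u u) -/a -/b.
have -> : e ^+ 2 * b = e * (e * (b - a)) + e ^+ 2 * a by ring.
rewrite e_ba; nra.
Qed.

(* Caratheodory's reduction: the support of [l] lies on a hyperplane avoiding
   the origin, so a linear dependence among the [v i] is an affine one. *)
Lemma caratheodory_hyperplane v u a l : (#|K| < N)%N -> a != 0 -> in_simplex l ->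
  (forall i, 0 < l ord0 i -> dot u (v i) = a) ->
  exists mu k, [/\ in_simplex mu, mu ord0 k = 0 & comb v mu =1 comb v l].
Proof.
move=> ltKN a_neq0 lS on_hyp; have [l_ge0 l_sum1] := lS.
have [/existsP[k /eqP lk0]|] := boolP [exists k, l ord0 k == 0]; first by exists l, k; split.
rewrite negb_exists => /forallP l_neq0.
have l_gt0 i : 0 < l ord0 i by rewrite lt_def l_neq0 l_ge0.
have [be [[i1 be_i1] be_dep]] := exists_lin_dep v ltKN.
have sum_be : \sum_i be i = 0.
  have : a * \sum_i be i = 0.
    rewrite mulr_sumr (eq_bigr (fun i => be i * dot u (v i))) => [|i _]; last first.
      by rewrite on_hyp // mulrC.
    rewrite /dot; under eq_bigr do rewrite mulr_sumr.
    rewrite exchange_big big1 // => kk _.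
    by under eq_bigr do rewrite mulrCA; rewrite -mulr_sumr be_dep mulr0.
  by move/eqP; rewrite mulf_eq0 (negbTE a_neq0) => /eqP.
have [ip be_ip] := sum_eq0_exists_gt0 sum_be be_i1.
pose ratio i := be i / l ord0 i.
have [k _ ratio_max] := arg_maxP ratio (isT : xpredT ip).
set M := ratio k; have M_gt0 : 0 < M.
  by apply: lt_le_trans (ratio_max ip isT); rewrite divr_gt0.
have be_k : be k != 0 by apply: contraTneq M_gt0; rewrite /M /ratio => ->; rewrite mul0r ltxx.
exists (\row_i (l ord0 i - be i / M)), k; split.
- split => [i|].
    rewrite mxE subr_ge0 ler_pdivrMr // mulrC -ler_pdivrMr //.
    exact: ratio_max.
  by under eq_bigr do rewrite mxE; rewrite sumrB -mulr_suml sum_be mul0r subr0.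
- by rewrite mxE /M /ratio; field; rewrite be_k gt_eqF.
- move=> kk; rewrite /comb; under eq_bigr do rewrite mxE mulrBl mulrAC.
  by rewrite sumrB -mulr_suml be_dep mul0r subr0.
Qed.

End ConvexCombinations.

Section SimplexMinimum.
Import classical_sets topology normedtype derive.
Import numFieldNormedType.Exports.
Local Open Scope classical_set_scope.
Variables (R : realType) (N : nat).

Let continuous_sum (F : 'I_N -> 'rV[R]_N -> R) :
  (forall i, continuous (F i)) -> continuous (fun t => \sum_i F i t).
Proof. by move=> F_cont; apply: continuous_big => [|i _]; [exact: add_continuous|]. Qed.

Lemma simplex_argmin (g : 'rV[R]_N -> R) : (0 < N)%N -> continuous g ->
  exists2 l, in_simplex l & forall t, in_simplex t -> g l <= g t.
Proof.
move=> N_gt0 g_cont.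
pose A := [set t : 'rV[R]_N | forall i, `[0, 1] (t ord0 i)].
pose B := (fun t : 'rV[R]_N => \sum_i t ord0 i) @^-1` [set 1].
have AB_compact : compact (A `&` B).
  apply: compact_closedI; first exact: (rV_compact (fun=> @segment_compact R 0 1)).
  apply: preimage_closed; last exact: closed_eq.
  by move=> t _; apply: continuous_sum => i; exact: coord_continuous.
have AB_ne0 : (A `&` B) !=set0.
  exists (\row_i (i == Ordinal N_gt0)%:R); split.
    by move=> i; rewrite /= mxE in_itv /=; case: (_ == _); rewrite /= ?lexx ?ler01.
  rewrite /B /= (bigD1 (Ordinal N_gt0)) //= big1 ?mxE ?eqxx ?addr0 // => i /negbTE.
  by rewrite mxE => ->.
have [l] := EVT_min_rV AB_ne0 AB_compact (continuous_subspaceT g_cont).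
rewrite inE => -[lA lB] l_min; exists l => [|t [t_ge0 t_sum1]].
  by split=> // i; have := lA i; rewrite /= in_itv /= => /andP[].
apply: l_min; rewrite inE; split => // i; rewrite /= in_itv /= t_ge0 /=.
by rewrite -t_sum1 (bigD1 i) //= lerDl; exact: sumr_ge0.
Qed.

Lemma continuous_dot_comb (K : finType) (v : 'I_N -> K -> R) :
  continuous (fun l : 'rV[R]_N => dot (comb v l) (comb v l)).
Proof.
have comb_cont k : continuous (fun l : 'rV[R]_N => comb v l k).
  apply: continuous_sum => i l; apply: continuousM; first exact: coord_continuous.
  exact: cst_continuous.
apply: continuous_big => [|k _ l]; first exact: add_continuous.
by apply: continuousM; apply: comb_cont.
Qed.

End SimplexMinimum.

Section ColorfulCaratheodory.
Variables (R : realType) (K : finType) (N r : nat) (c : 'I_N -> 'I_r -> K -> R).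
Hypothesis c_centered : forall i k, \sum_j c i j k = 0.
Hypothesis ltKN : (#|K| < N)%N.
Hypothesis r_gt0 : (0 < r)%N.

Let colored (s : 'I_N -> 'I_r) i := c i (s i).
Let sqnorm s l := dot (comb (colored s) l) (comb (colored s) l).

Let colored_argmin : exists (s : 'I_N -> 'I_r) l, in_simplex l /\
  forall s' l', in_simplex l' -> sqnorm s l <= sqnorm s' l'.
Proof.
have N_gt0 : (0 < N)%N by apply: leq_ltn_trans ltKN.
have argmin (s : {ffun 'I_N -> 'I_r}) :
    exists l, in_simplex l /\ forall t, in_simplex t -> sqnorm s l <= sqnorm s t.
  have [l lS l_min] := simplex_argmin N_gt0 (continuous_dot_comb (v := colored s)).
  by exists l.
have [lmin lmin_spec] := boolp.choice argmin.
have [s _ s_min] := arg_minP (fun s : {ffun _ -> _} => sqnorm s (lmin s))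
  (isT : xpredT [ffun=> Ordinal r_gt0]).
exists s, (lmin s); split => [|s' l' l'S]; first exact: (lmin_spec s).1.
pose fs' := [ffun i => s' i].
have -> : sqnorm s' l' = sqnorm fs' l'.
  by apply: eq_dot => k; apply: eq_bigr => i _; rewrite /colored ffunE.
exact: le_trans (s_min fs' isT) ((lmin_spec fs').2 l' l'S).
Qed.

Theorem colorful_caratheodory : exists (s : 'I_N -> 'I_r) l,
  in_simplex l /\ forall k, comb (fun i => c i (s i)) l k = 0.
Proof.
have [s [l [lS l_min]]] := colored_argmin.
exists s, l; split => //; set x := comb _ l.
apply: dot_eq0; apply/eqP; apply: contraT => x_neq0.
have x_gt0 : 0 < dot x x by rewrite lt_def x_neq0 dot_ge0.
have far i : dot x x <= dot x (c i (s i)).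
  rewrite leNgt; apply/negP => /(comb_descent lS) [l' l'S lt_l'].
  by have := lt_le_trans lt_l' (l_min s l' l'S); rewrite ltxx.
have on_hyp i : 0 < l ord0 i -> dot x (c i (s i)) = dot x x.
  have terms_ge0 j : true -> 0 <= l ord0 j * (dot x (c j (s j)) - dot x x).
    by move=> _; rewrite mulr_ge0 ?subr_ge0 ?lS.1 ?far.
  have terms_sum0 : \sum_j l ord0 j * (dot x (c j (s j)) - dot x x) = 0.
    under eq_bigr do rewrite mulrBr.
    by rewrite sumrB -mulr_suml lS.2 mul1r -dot_comb subrr.
  move=> /gt_eqF l_neq0; move: (psumr_eq0P terms_ge0 terms_sum0 (i := i) isT) => /eqP.
  by rewrite mulf_eq0 l_neq0 subr_eq0 => /eqP.
have [mu [k [muS muk0 mu_x]]] := caratheodory_hyperplane ltKN x_neq0 lS on_hyp.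
have [j xj_le0] : exists j, dot x (c k j) <= 0.
  apply: (sum_eq0_exists_le0 (Ordinal r_gt0)).
  rewrite /dot exchange_big big1 // => kk _.
  by rewrite -mulr_sumr c_centered mulr0.
pose s' := [ffun i => if i == k then j else s i].
have mu_x' : comb (colored s') mu =1 x.
  move=> kk; rewrite /x -mu_x; apply: eq_bigr => i _; rewrite /colored ffunE.
  by case: eqVneq => [->|//]; rewrite muk0 !mul0r.
have [l' l'S] : exists2 l', in_simplex l' & sqnorm s' l' < sqnorm s' mu.
  apply: (comb_descent (k := k) muS).
  rewrite (eq_dot mu_x' (fun _ => erefl)) (eq_dot mu_x' mu_x') /colored ffunE eqxx.
  exact: le_lt_trans xj_le0 x_gt0.
rewrite /sqnorm (eq_dot mu_x' mu_x') => lt_l'.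
by have := lt_le_trans lt_l' (l_min s' l' l'S); rewrite ltxx.
Qed.

End ColorfulCaratheodory.

Lemma sum_indicator_mul (R : pzSemiRingType) (I : finType) (a : I) (F : I -> R) :
  \sum_j (j == a)%:R * F j = F a.
Proof.
rewrite (bigD1 a) //= eqxx mul1r big1 ?addr0 // => j /negbTE ->.
exact: mul0r.
Qed.

Section SarkariaTensor.
Variables (R : realType) (d m r : nat) (q : 'I_m -> 'rV[R]_d).

Definition class_sum (s : 'I_m -> 'I_r) (l : 'rV[R]_m) j (a : option 'I_d) :=
  \sum_(i | s i == j) l ord0 i * (if a is Some a' then q i ord0 a' else 1).

Lemma common_point_of_class_sums s l j0 : in_simplex l ->
  (forall j a, class_sum s l j a = class_sum s l j0 a) ->
  (forall j, exists i, s i = j) /\ exists x, forall j, in_conv q (color_class s j) x.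
Proof.
move=> [l_ge0 l_sum1] Z_const; pose z := class_sum s l j0 None.
have Z_None j : class_sum s l j None = \sum_(i | s i == j) l ord0 i.
  by apply: eq_bigr => i _; rewrite mulr1.
have z_gt0 : 0 < z.
  have : \sum_j class_sum s l j None = 1.
    by rewrite -l_sum1 (partition_big s xpredT) //=; apply: eq_bigr => j _; rewrite Z_None.
  under eq_bigr do rewrite Z_const; rewrite sumr_const card_ord -mulr_natr => z_r.
  have r_gt0 : 0 < r%:R :> R by rewrite ltr0n; apply: leq_ltn_trans (ltn_ord j0).
  by rewrite -(pmulr_lgt0 _ r_gt0) z_r ltr01.
split=> [j|].
  have [i /eqP|no_i] := pickP (fun i => s i == j); first by exists i.
  by move: z_gt0; rewrite /z -(Z_const j) Z_None big_pred0 ?ltxx.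
exists (\row_a (class_sum s l j0 (Some a) / z)) => j.
exists (fun i => if s i == j then l ord0 i / z else 0); split.
- by move=> i; case: (s i == j); rewrite ?divr_ge0 // ltW.
- by move=> i; rewrite inE => /negbTE ->.
- by rewrite -big_mkcond /= -mulr_suml -Z_None Z_const mulfV // gt_eqF.
- apply/rowP => a; rewrite mxE summxE -(Z_const j) /class_sum mulr_suml big_mkcond /=.
  by apply: eq_bigr => i _; rewrite mxE; case: (s i == j); rewrite ?scale0r ?mxE //=; ring.
Qed.

End SarkariaTensor.

(* Sarkaria's tensor trick: lift the points to [(q i, 1)] in [R^(d+1)], tensor
   them with the [r] vectors [e_1, ..., e_(r-1), -(e_1 + ... + e_(r-1))] of
   [R^(r-1)], which sum to zero, and apply the colorful Caratheodory theorem in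
   dimension [(d+1)(r-1) < m]. *)
Theorem tverberg (R : realType) (d r m : nat) (q : 'I_m -> 'rV[R]_d) :
  (0 < r)%N -> (Tv d r <= m)%N ->
  exists s : 'I_m -> 'I_r, (forall j, exists i, s i = j) /\
    exists x, forall j, in_conv q (color_class s j) x.
Proof.
case: r => // r' _ Tv_le_m.
pose homog i (a : option 'I_d) := if a is Some a' then q i ord0 a' else 1.
pose w (j : 'I_r'.+1) (b : 'I_r') : R :=
  (j == widen_ord (leqnSn r') b)%:R - (j == ord_max)%:R.
pose c i j (k : option 'I_d * 'I_r') := homog i k.1 * w j k.2.
have c_centered i k : \sum_j c i j k = 0.
  have indicator a : \sum_j (j == a)%:R = 1 :> R.
    by rewrite -[RHS](sum_indicator_mul a (fun=> 1)); apply: eq_bigr => j _; rewrite mulr1.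
  by rewrite -mulr_sumr sumrB !indicator subrr mulr0.
have ltKm : (#|{: option 'I_d * 'I_r'}| < m)%N.
  by rewrite card_prod card_option !card_ord; move: Tv_le_m; rewrite /Tv subSS subn0 !addn1.
have [s [l [lS comb0]]] := colorful_caratheodory c_centered ltKm (ltn0Sn r').
exists s; apply: (common_point_of_class_sums (j0 := ord_max) lS) => j a.
have [->|j_neq] := eqVneq j ord_max; first by [].
have ltjr : (j < r')%N.
  rewrite ltn_neqAle -ltnS ltn_ord andbT.
  by apply: contra j_neq => /eqP j_r; apply/eqP/val_inj.
have := comb0 (a, Ordinal ltjr); rewrite /comb (partition_big s xpredT) //=.
rewrite (eq_bigr (fun j' => w j' (Ordinal ltjr) * class_sum q s l j' a)) => [|j' _].
  rewrite /w; under eq_bigr do rewrite mulrBl.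
  rewrite sumrB !sum_indicator_mul => /eqP; rewrite subr_eq0 => /eqP <-.
  by congr class_sum; apply: val_inj.
by rewrite /class_sum mulr_sumr; apply: eq_bigr => i /eqP <-; rewrite /c /homog /=; ring.
Qed.

Lemma in_conv_sub (R : realType) d n (p : 'I_n -> 'rV[R]_d) (B B' : {set 'I_n}) x :
  B \subset B' -> in_conv p B x -> in_conv p B' x.
Proof.
move=> /subsetP BB' [w [w_ge0 w_out w_sum1 w_x]]; exists w; split => // i B'i.
by apply: w_out; apply: contra B'i; apply: BB'.
Qed.

Lemma in_conv_lift (R : realType) d m (p : 'I_m.+1 -> 'rV[R]_d) (B : {set 'I_m}) x :
  in_conv (fun i => p (lift ord_max i)) B x -> in_conv p (lift ord_max @: B) x.
Proof.
move=> [w [w_ge0 w_out w_sum1 w_x]].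
have lift_widen i : widen_ord (leqnSn m) i = lift ord_max i.
  by apply: val_inj; rewrite /= /bump leqNgt ltn_ord.
exists (fun i => if unlift ord_max i is Some i' then w i' else 0); split.
- by move=> i; case: (unlift ord_max i).
- move=> i; have [i' ->|->] := unliftP ord_max i; rewrite ?liftK ?unlift_none //.
  by move=> Bi'; apply: w_out; apply: contra Bi' => Bi'; apply: imset_f.
- rewrite big_ord_recr /= unlift_none addr0 -w_sum1; apply: eq_bigr => i _.
  by rewrite lift_widen liftK.
- rewrite w_x big_ord_recr /= unlift_none scale0r addr0; apply: eq_bigr => i _.
  by rewrite lift_widen liftK.
Qed.

Lemma tverberg_extend_color (R : realType) d m r (p : 'I_m.+1 -> 'rV[R]_d)
    (s : 'I_m -> 'I_r) x k : (forall j, exists i, s i = j) ->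
  (forall j, in_conv (fun i => p (lift ord_max i)) (color_class s j) x) ->
  tverberg_partition p r (color_part (extend_color s k)).
Proof.
move=> s_surj x_conv; split; first exact/color_part_r_partition/extend_color_surj.
exists x => _ /imsetP[j _ ->]; apply: in_conv_sub (in_conv_lift (x_conv j)).
by apply/subsetP => _ /imsetP[i si_j ->]; rewrite inE extend_color_lift; rewrite inE in si_j.
Qed.

Theorem proposition3p4 (R : realType) (r d n : nat) (p : 'I_n -> 'rV[R]_d) :
  (0 < r)%N -> (0 < d)%N -> injective p -> (Tv d r < n)%N ->
  tverberg_clique_number_is p r r.
Proof.
move=> r_gt0 d_gt0 _ Tv_lt_n; case: n p Tv_lt_n => [//|m] p Tv_le_m.
have [s [s_surj [x x_conv]]] := tverberg (fun i => p (lift ord_max i)) r_gt0 Tv_le_m.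
have partT_ext k : partT (color_part (extend_color s k)).
  by have /andP[] := color_part_r_partition (extend_color_surj s_surj k).
split.
  exists [set color_part (extend_color s k) | k : 'I_r]; split; last first.
    rewrite card_imset ?card_ord // => k l eq_kl; apply/eqP; apply: contraT.
    by move/(extend_color_neq s_surj); rewrite eq_kl eqxx.
  split => [_ /imsetP[k _ ->]|_ _ /imsetP[k _ ->] /imsetP[l _ ->] neq_kl].
    exact: tverberg_extend_color.
  by apply/partition_dist1P => //; exists ord_max; apply: adj_extend_color.
move=> C [C_tv C_dist]; apply: clique_card_le => // [P /C_tv[] //|r2].
by move: Tv_le_m; rewrite r2 /Tv; apply: leq_ltn_trans; rewrite subSS subn0 muln1 !addn1.
Qed.
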